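(* Let $\mathcal{C}\subset\mathbb{R}^n$ be closed and Clarke regular, $f:\mathbb{R}^n\to\mathbb{R}^n$ continuous and $G:\mathcal{C}\to\mathbb{S}^n_+$ a continuous metric, with $\gamma\ge\sup_{x\in\mathcal{C}}\|f(x)\|_{G(x)}$ finite. Then the inclusion $\dot x\in F(x):=f(x)-N^G_x\mathcal{C}\cap\gamma\mathbb{B}$, $x\in\mathcal{C}$, is well-posed.
   Context: $\mathbb{B}$ is the closed unit ball; $\|u\|_{G(x)}:=(u^TG(x)u)^{1/2}$. $T_x\mathcal{C}$ is the tangent cone ($v\in T_x\mathcal{C}$ iff $x_k\to x$ in $\mathcal{C}$, $\delta_k\to0^+$ with $(x_k-x)/\delta_k\to v$); Clarke regular means $x\mapsto T_x\mathcal{C}$ is inner semicontinuous. $N^G_x\mathcal{C}:=\{\eta:\eta^TG(x)v\le0\ \forall v\in T_x\mathcal{C}\}$. An inclusion $\dot x\in H(x)$, $x\in\mathcal{C}$, is well-posed if $\mathcal{C}$ is closed, $H$ is outer semicontinuous and locally bounded relative to $\mathcal{C}$, and $H(x)$ is non-empty and convex for all $x\in\mathcal{C}$. *)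

From HB Require Import structures.
From mathcomp Require Import all_boot all_order all_algebra.
From mathcomp Require Import all_classical all_reals all_analysis.
Set Implicit Arguments. Unset Strict Implicit. Unset Printing Implicit Defensive.
Import Order.TTheory GRing.Theory Num.Theory.
Import numFieldNormedType.Exports.
Local Open Scope classical_set_scope.
Local Open Scope ring_scope.

Section Defs.
Variables (R : realType) (n : nat).
Notation vec := 'rV[R]_n.

Definition qform (A : 'M[R]_n) (u v : vec) : R := (u *m A *m v^T) 0 0.

Definition enorm (u : vec) : R := Num.sqrt ((u *m u^T) 0 0).

Definition Gnorm (A : 'M[R]_n) (u : vec) : R := Num.sqrt (qform A u u).

Definition scaled_ball (g : R) : set vec := [set u | enorm u <= g].

Definition spd (A : 'M[R]_n) : Prop :=
  A^T = A /\ forall u : vec, u != 0 -> 0 < qform A u u.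

Definition tangent_cone (C : set vec) (x : vec) : set vec :=
  [set v | exists (xk : nat -> vec) (dk : nat -> R),
      (forall k, C (xk k)) /\ xk @ \oo --> x /\
      (forall k, 0 < dk k) /\ dk @ \oo --> (0 : R) /\
      (fun k => (dk k)^-1 *: (xk k - x)) @ \oo --> v].

Definition inner_semicontinuous_on (C : set vec) (H : vec -> set vec) : Prop :=
  forall x, C x -> forall v, H x v -> forall e : R, 0 < e ->
    exists2 d : R, 0 < d & forall y, C y -> ball x d y ->
      exists w, H y w /\ ball v e w.

Definition clarke_regular (C : set vec) : Prop :=
  inner_semicontinuous_on C (tangent_cone C).

Definition normal_cone (G : vec -> 'M[R]_n) (C : set vec) (x : vec) : set vec :=
  [set eta | forall v, tangent_cone C x v -> qform (G x) eta v <= 0].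

Definition outer_semicontinuous_on (C : set vec) (H : vec -> set vec) : Prop :=
  forall (xk yk : nat -> vec) (x y : vec),
    (forall k, C (xk k)) -> C x -> (forall k, H (xk k) (yk k)) ->
    xk @ \oo --> x -> yk @ \oo --> y -> H x y.

Definition locally_bounded_on (C : set vec) (H : vec -> set vec) : Prop :=
  forall x, C x -> exists2 d : R, 0 < d & exists M : R,
    forall y, C y -> ball x d y -> forall z, H y z -> enorm z <= M.

Definition convex_set_of (A : set vec) : Prop :=
  forall a b, A a -> A b -> forall t : R, 0 <= t <= 1 ->
    A (t *: a + (1 - t) *: b).

Definition well_posed (C : set vec) (H : vec -> set vec) : Prop :=
  closed C /\ outer_semicontinuous_on C H /\ locally_bounded_on C H /\
  (forall x, C x -> H x !=set0 /\ convex_set_of (H x)).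

Definition proj_inclusion (f : vec -> vec) (G : vec -> 'M[R]_n) (C : set vec)
    (g : R) (x : vec) : set vec :=
  [set f x - eta | eta in normal_cone G C x `&` scaled_ball g].

End Defs.

From HB Require Import structures.
From mathcomp Require Import all_boot all_order all_algebra.
From mathcomp Require Import all_classical all_reals all_analysis.
From mathcomp Require Import ring lra.
Import Order.TTheory GRing.Theory Num.Theory.
Import numFieldNormedType.Exports.
Local Open Scope classical_set_scope.
Local Open Scope ring_scope.
Set Implicit Arguments.
Unset Strict Implicit.

(* The heart of the matter is the closed graph of x |-> N^G_x C.  If eta_k is
   G(x_k)-normal at x_k, eta_k -> eta and v is tangent at x, Clarke regularity
   provides vectors w_k tangent at x_k with w_k -> v, so that
   0 >= <eta_k, w_k>_{G(x_k)} -> <eta, v>_{G(x)} by continuity of G.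
   Intersecting with the closed ball gamma B and translating by the continuous
   f preserves closed graphs.  Convexity holds because a normal cone is an
   intersection of half-spaces, local boundedness because f is continuous and
   the normal part lies in gamma B, and f(x) - 0 is in F(x) since
   gamma >= |f(x)|_{G(x)} >= 0. *)

Lemma cvg_entry (R : realType) (p q : nat) T (F : set_system T) (FF : Filter F)
    (u : T -> 'M[R]_(p, q)) (M : 'M[R]_(p, q)) i j :
  u @ F --> M -> (fun t => u t i j) @ F --> M i j.
Proof.
move=> /cvg_ballP uM; apply/cvg_ballP => e e_gt0.
by apply: filterS (uM e e_gt0) => t [_]; apply.
Qed.

Lemma within_continuous_cvg (T U : topologicalType) (A : set T) (g : T -> U)
    (u : nat -> T) (x : T) :
  {within A, continuous g} -> A x -> (forall k, A (u k)) ->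
  u @ \oo --> x -> g \o u @ \oo --> g x.
Proof.
move=> /subspace_continuousP gc Ax Au u_x.
apply: cvg_comp (gc x Ax) => P /= Px.
have : \forall k \near \oo, A (u k) -> P (u k) := u_x _ Px.
by apply: filterS => k; apply.
Qed.

Section QuadraticForms.
Variables (R : realType) (n : nat).
Notation vec := 'rV[R]_n.
Implicit Types (A : 'M[R]_n) (u v w : vec).

Lemma qformE A u v : qform A u v = \sum_i \sum_j u 0 i * A i j * v 0 j.
Proof.
rewrite /qform mxE.
under eq_bigr do rewrite !mxE big_distrl /=.
rewrite exchange_big /=; apply: eq_bigr => i _.
by apply: eq_bigr => j _; rewrite ?mxE.
Qed.

Lemma qformDZl A u w v (s t : R) :
  qform A (s *: u + t *: w) v = s * qform A u v + t * qform A w v.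
Proof.
rewrite !qformE !mulr_sumr -big_split /=; apply: eq_bigr => i _.
rewrite !mulr_sumr -big_split /=; apply: eq_bigr => j _.
by rewrite !mxE; ring.
Qed.

Lemma cvg_qform T (F : set_system T) (FF : Filter F)
    (A : T -> 'M[R]_n) (u v : T -> vec) A0 u0 v0 :
  A @ F --> A0 -> u @ F --> u0 -> v @ F --> v0 ->
  (fun t => qform (A t) (u t) (v t)) @ F --> qform A0 u0 v0.
Proof.
move=> A_A0 u_u0 v_v0; rewrite qformE; under eq_cvg do rewrite qformE.
apply: cvg_big => [|i _]; first exact: add_continuous.
apply: cvg_big => [|j _]; first exact: add_continuous.
by apply: cvgM; [apply: cvgM|]; exact: cvg_entry.
Qed.

Definition sqnorm u : R := (u *m u^T) 0 0.

Lemma sqnormE u : sqnorm u = \sum_i u 0 i ^+ 2.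
Proof. by rewrite /sqnorm mxE; apply: eq_bigr => i _; rewrite !mxE expr2. Qed.

Lemma sqnorm_ge0 u : 0 <= sqnorm u.
Proof. by rewrite sqnormE; apply: sumr_ge0 => i _; exact: sqr_ge0. Qed.

Lemma continuous_sqnorm : continuous sqnorm.
Proof.
move=> u; have -> : sqnorm = fun w => qform 1 w w.
  by apply: funext => w; rewrite /qform mulmx1.
exact: (@cvg_qform _ (nbhs u) _ (fun=> 1) (fun w => w) (fun w => w) 1 u u
  (cvg_cst _) cvg_id cvg_id).
Qed.

Lemma sqnormB_le u w : sqnorm (u - w) <= 2 * sqnorm u + 2 * sqnorm w.
Proof.
rewrite !sqnormE !mulr_sumr -big_split /=; apply: ler_sum => i _.
by rewrite !mxE; have := sqr_ge0 (u 0 i + w 0 i); nra.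
Qed.

Lemma sqnorm_convex u w (t : R) : 0 <= t <= 1 ->
  sqnorm (t *: u + (1 - t) *: w) <= t * sqnorm u + (1 - t) * sqnorm w.
Proof.
case/andP=> t_ge0 t_le1.
rewrite !sqnormE !mulr_sumr -big_split /=; apply: ler_sum => i _.
rewrite !mxE; have : 0 <= t * (1 - t) * (u 0 i - w 0 i) ^+ 2.
  by apply: mulr_ge0; [apply: mulr_ge0; lra | exact: sqr_ge0].
nra.
Qed.

Lemma enorm_leP u (g : R) : enorm u <= g <-> 0 <= g /\ sqnorm u <= g ^+ 2.
Proof.
have norm_ge0 := sqrtr_ge0 (sqnorm u); rewrite /enorm -/(sqnorm u); split.
  move=> u_le_g; have g_ge0 := le_trans norm_ge0 u_le_g; split => //.
  by rewrite -(sqr_sqrtr (sqnorm_ge0 u)) lerXn2r ?nnegrE.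
by case=> g_ge0 /ler_wsqrtr; rewrite sqrtr_sqr ger0_norm.
Qed.

Lemma continuous_enorm : continuous (@enorm R n).
Proof.
move=> u; apply: continuous_comp; first exact: continuous_sqnorm.
exact: sqrt_continuous.
Qed.

End QuadraticForms.

Section SetValuedMaps.
Variables (R : realType) (n : nat).
Notation vec := 'rV[R]_n.
Implicit Types (C A B : set vec) (H K : vec -> set vec) (f : vec -> vec).

Lemma scaled_ball0 (g : R) : 0 <= g -> scaled_ball g (0 : vec).
Proof.
by move=> g_ge0; apply/enorm_leP; rewrite /sqnorm mul0mx mxE sqr_ge0.
Qed.

Lemma closed_scaled_ball (g : R) : closed (scaled_ball g : set vec).
Proof.
exact: (continuous_closedP _).1 (@continuous_enorm R n) _ (@closed_le R g).
Qed.

Lemma convex_scaled_ball (g : R) : convex_set_of (scaled_ball g : set vec).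
Proof.
move=> a b /enorm_leP[g_ge0 a_le] /enorm_leP[_ b_le] t t01.
apply/enorm_leP; split => //; apply: le_trans (sqnorm_convex a b t01) _.
by case/andP: t01 => t_ge0 t_le1; nra.
Qed.

Lemma convex_setI A B :
  convex_set_of A -> convex_set_of B -> convex_set_of (A `&` B).
Proof.
by move=> cA cB a b [Aa Ba] [Ab Bb] t t01; split; [exact: cA | exact: cB].
Qed.

Lemma convex_set_subl (a : vec) A :
  convex_set_of A -> convex_set_of [set a - e | e in A].
Proof.
move=> cA _ _ [e Ae <-] [e' Ae' <-] t t01.
exists (t *: e + (1 - t) *: e'); first exact: cA.
by apply/rowP => i; rewrite !mxE; ring.
Qed.

Lemma normal_cone0 G C x : normal_cone G C x 0.
Proof. by move=> v _; rewrite /qform !mul0mx mxE. Qed.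

Lemma convex_normal_cone G C x : convex_set_of (normal_cone G C x).
Proof.
move=> a b Na Nb t /andP[t_ge0 t_le1] v Tv; rewrite qformDZl.
have := Na v Tv; have := Nb v Tv; have : 0 <= 1 - t by lra.
nra.
Qed.

Lemma inner_semicontinuous_on_cvg C H x v (xk : nat -> vec) (e : R) :
  inner_semicontinuous_on C H -> C x -> H x v -> (forall k, C (xk k)) ->
  xk @ \oo --> x -> 0 < e ->
  \forall k \near \oo, exists w, H (xk k) w /\ ball v e w.
Proof.
move=> H_isc Cx Hxv Cxk xk_x e_gt0.
have [d d_gt0 near_x] := H_isc x Cx v Hxv e e_gt0.
by apply: filterS (cvg_ball xk_x d_gt0) => k; exact: near_x (Cxk k).
Qed.

Lemma outer_semicontinuous_normal_cone G C :
  clarke_regular C -> {within C, continuous G} ->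
  outer_semicontinuous_on C (normal_cone G C).
Proof.
move=> C_regular G_cont xk etak x eta Cxk Cx N_etak xk_x etak_eta v Tv.
rewrite leNgt; apply/negP => q_gt0.
have : (fun p : nat * vec => qform (G (xk p.1)) (etak p.1) p.2)
    @ filter_prod \oo (nbhs v) --> qform (G x) eta v.
  apply: cvg_qform; last exact: cvg_snd.
    exact: cvg_comp cvg_fst (within_continuous_cvg G_cont Cx Cxk xk_x).
  exact: cvg_comp cvg_fst etak_eta.
move=> /cvgr_gt /(_ 0 q_gt0)[[P Q]] [/= eventually_P].
move=> /nbhs_ballP[e e_gt0 vQ] q_pos.
have [k [Pk [w [Tw vw]]]] := filter_ex (filterI eventually_P
  (inner_semicontinuous_on_cvg C_regular Cx Tv Cxk xk_x e_gt0)).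
have := N_etak k w Tw; rewrite leNgt (q_pos (k, w)) //.
by split => //; exact: vQ.
Qed.

Lemma outer_semicontinuous_onI C H K :
  outer_semicontinuous_on C H -> outer_semicontinuous_on C K ->
  outer_semicontinuous_on C (fun x => H x `&` K x).
Proof.
move=> H_osc K_osc xk yk x y Cxk Cx HKk xk_x yk_y.
have [Hk Kk] : (forall k, H (xk k) (yk k)) /\ (forall k, K (xk k) (yk k)).
  by split=> k; case: (HKk k).
by split; [exact: H_osc Hk xk_x yk_y | exact: K_osc Kk xk_x yk_y].
Qed.

Lemma outer_semicontinuous_on_cst C A :
  closed A -> outer_semicontinuous_on C (fun=> A).
Proof.
move=> A_closed xk yk x y _ _ Ayk _ yk_y.
by apply: (closed_cvg A A_closed _ _ yk_y); exact: nearW.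
Qed.

Lemma outer_semicontinuous_on_subl C H f : continuous f ->
  outer_semicontinuous_on C H ->
  outer_semicontinuous_on C (fun x => [set f x - e | e in H x]).
Proof.
move=> f_cont H_osc xk yk x y Cxk Cx Hk xk_x yk_y.
exists (f x - y); last by rewrite subKr.
apply: (H_osc xk (fun k => f (xk k) - yk k)) => //.
  by move=> k; case: (Hk k) => e He <-; rewrite subKr.
by apply: cvgB yk_y; exact: cvg_comp xk_x (f_cont x).
Qed.

Lemma locally_bounded_on_ball C H (g : R) :
  (forall x, C x -> H x `<=` scaled_ball g) -> locally_bounded_on C H.
Proof.
by move=> H_le x Cx; exists 1 => //; exists g => y Cy _ z /(H_le y Cy).
Qed.

Lemma locally_bounded_on_subl C H f : continuous f ->
  locally_bounded_on C H ->
  locally_bounded_on C (fun x => [set f x - e | e in H x]).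
Proof.
move=> f_cont H_bounded x Cx; have [d d_gt0 [M H_le_M]] := H_bounded x Cx.
have f_near : \forall y \near x, sqnorm (f y) < sqnorm (f x) + 1.
  have /cvgr_lt := continuous_comp (f_cont x) (@continuous_sqnorm R n (f x)).
  by apply; rewrite ltrDl.
have [d' d'_gt0 near_x] :=
  (nbhs_ballP x _).1 (filterI (nbhsx_ballx x _ d_gt0) f_near).
exists d' => //; exists (Num.sqrt (2 * (sqnorm (f x) + 1) + 2 * M ^+ 2)).
move=> y Cy /near_x[xy fy_lt] _ [e He <-].
have /enorm_leP[_ e_le] := H_le_M y Cy xy e He.
by apply: ler_wsqrtr; apply: le_trans (sqnormB_le _ _) _; lra.
Qed.

End SetValuedMaps.

Theorem lemma2p12 (R : realType) (n : nat) (C : set 'rV[R]_n)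
    (f : 'rV[R]_n -> 'rV[R]_n) (G : 'rV[R]_n -> 'M[R]_n) (gamma : R) :
  closed C -> clarke_regular C ->
  continuous f ->
  {within C, continuous G} -> (forall x, C x -> spd (G x)) ->
  (forall x, C x -> Gnorm (G x) (f x) <= gamma) ->
  well_posed C (proj_inclusion f G C gamma).
Proof.
move=> C_closed C_regular f_cont G_cont _ f_le_gamma.
split=> //; split; [|split].
- apply: outer_semicontinuous_on_subl f_cont _.
  apply: (outer_semicontinuous_onI (K := fun=> scaled_ball gamma)).
    exact: outer_semicontinuous_normal_cone.
  by apply: outer_semicontinuous_on_cst; exact: closed_scaled_ball.
- apply: locally_bounded_on_subl f_cont _.
  by apply: (locally_bounded_on_ball (g := gamma)) => x _ e [].
- move=> x Cx; have gamma_ge0 := le_trans (sqrtr_ge0 _) (f_le_gamma x Cx).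
  split.
    exists (f x - 0); exists 0 => //.
    by split; [exact: normal_cone0 | exact: scaled_ball0].
  apply: convex_set_subl; apply: convex_setI.
    exact: convex_normal_cone.
  exact: convex_scaled_ball.
Qed.
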